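(* Let $x\in P$ be a search point in the population $P$ of DEMO on the weighted vertex cover problem such that $Cost(x)+2\cdot LP(x)\le 2\cdot OPT$ and $b_2(x)>0$. Then there exists a 1-bit flip of $x$ leading to a search point $x'$ with $Cost(x')+2\cdot LP(x')\le 2\cdot OPT$ and $b_2(x')<b_2(x)$.
   Context: Weighted vertex cover: $G=(V,E)$, $V=\{v_1,\dots,v_n\}$, $w:V\to\mathbb{N}^+$; $OPT$ is the minimum weight of a vertex cover. Search points $x\in\{0,1\}^n$; $Cost(x)=\sum_i w(v_i)x_i$; $G(x)=(V(x),E(x))$ with $V(x)=V\setminus\{v_i:x_i=1\}$, $E(x)$ = edges with no selected endpoint; $LP(x)$ = optimal value of: minimize $\sum_{v_i\in V(x)}w(v_i)y_i$ s.t. $y_i+y_j\ge1$ for $\{v_i,v_j\}\in E(x)$, $0\le y_i\le1$. $f(x)=(Cost(x),LP(x))$, $f(x)\le f(y)$ componentwise. DEMO: $\delta=\frac1{2n}$, $b_1(x)=\lceil\log_{1+\delta}(1+Cost(x))\rceil$, $b_2(x)=\lceil\log_{1+\delta}(1+LP(x))\rceil$, $b=(b_1,b_2)$. Start with uniformly random $x$, $P=\{x\}$. Each iteration: choose $x\in P$ uniformly; create $x'$ by flipping each bit independently with probability $1/n$; if some $y\in P$ satisfies ($f(y)\le f(x')$ and $f(y)\ne f(x')$) or ($b(y)=b(x')$ and $Cost(y)+2LP(y)\le Cost(x')+2LP(x')$), discard $x'$; otherwise add $x'$ and delete all other $z\in P$ with $f(x')\le f(z)$ or $b(z)=b(x')$.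 *)

From HB Require Import structures.
From mathcomp Require Import all_boot all_order all_algebra.
From mathcomp Require Import all_classical all_reals all_analysis.
Set Implicit Arguments. Unset Strict Implicit. Unset Printing Implicit Defensive.
Import Order.TTheory GRing.Theory Num.Theory.
Local Open Scope ring_scope.
Local Open Scope classical_set_scope.

(* A search point is x : {ffun 'I_n -> bool}; x i = true means v_i is selected. *)

Section WVC.
Variables (R : realType) (n : nat) (e : rel 'I_n) (w : 'I_n -> nat).

Definition Cost (x : {ffun 'I_n -> bool}) : nat := (\sum_(i < n | x i) w i)%N.

Definition is_vertex_cover (S : {set 'I_n}) : bool :=
  [forall i, forall j, e i j ==> (i \in S) || (j \in S)].
Definition set_weight (S : {set 'I_n}) : nat := (\sum_(i in S) w i)%N.
Definition OPT : nat :=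
  \big[minn/set_weight [set: 'I_n]%SET]_(S : {set 'I_n} | is_vertex_cover S) set_weight S.

(* LP(x): minimise sum_{v_i in V(x)} w(v_i) y_i subject to
   y_i + y_j >= 1 for {v_i,v_j} in E(x), 0 <= y_i <= 1 for v_i in V(x).
   (Coordinates of y outside V(x) are irrelevant.) *)
Definition LP_feasible (x : {ffun 'I_n -> bool}) (y : 'I_n -> R) : Prop :=
  (forall i j, e i j -> ~~ x i -> ~~ x j -> 1 <= y i + y j) /\
  (forall i, ~~ x i -> 0 <= y i <= 1).
Definition LP_obj (x : {ffun 'I_n -> bool}) (y : 'I_n -> R) : R :=
  \sum_(i < n | ~~ x i) (w i)%:R * y i.
Definition LP (x : {ffun 'I_n -> bool}) : R :=
  inf [set v | exists y, LP_feasible x y /\ v = LP_obj x y].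

Definition delta : R := ((2 * n)%:R)^-1.
Definition b2 (x : {ffun 'I_n -> bool}) : int :=
  Num.ceil (ln (1 + LP x) / ln (1 + delta)).

End WVC.

Definition flip n (x : {ffun 'I_n -> bool}) (i : 'I_n) : {ffun 'I_n -> bool} :=
  [ffun j => if j == i then ~~ x j else x j].

From HB Require Import structures.
From mathcomp Require Import all_boot all_order all_algebra.
From mathcomp Require Import all_classical all_reals all_analysis.
From mathcomp Require Import ring lra zify.
Set Implicit Arguments. Unset Strict Implicit. Unset Printing Implicit Defensive.
Import Order.TTheory GRing.Theory Num.Theory.
Local Open Scope ring_scope.

(* Since b_2(x) > 0, LP(x) > 0, so E(x) has an edge and every (near-)optimal
   LP solution y of G(x) has an uncovered vertex v with y_v >= 1/2; take the
   one maximising a := w(v) y_v.  Restricting y shows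
   LP(x') <= LP(x) - a <= LP(x) - w(v)/2 for x' = x with v added, which keeps
   Cost + 2 LP from increasing.  Rounding y to {0,1} bounds LP(x) + 1 by
   2 n a = a / delta, whence (1 + delta)(1 + LP(x')) <= 1 + LP(x) and b_2
   drops.  As the infimum LP(x) is only approached, this works up to every
   eps > 0; finitely many vertices then give one v that works exactly. *)

Lemma ceil_div_ln_lt (R : realType) (d L L' : R) :
  0 < d -> 0 <= L' -> (1 + d) * (1 + L') <= 1 + L ->
  Num.ceil (ln (1 + L') / ln (1 + d)) < Num.ceil (ln (1 + L) / ln (1 + d)).
Proof.
move=> d0 L'0 hle.
have lnd0 : 0 < ln (1 + d) by apply: ln_gt0; lra.
have hln : ln (1 + d) + ln (1 + L') <= ln (1 + L).
  have d1 : 0 < 1 + d by lra.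
  have L1 : 0 < 1 + L' by lra.
  rewrite -lnM ?posrE // ler_ln ?posrE //; first exact: mulr_gt0.
  by apply: (lt_le_trans _ hle); exact: mulr_gt0.
have hdiv : ln (1 + L') / ln (1 + d) <= ln (1 + L) / ln (1 + d) - 1.
  rewrite -[X in _ - X](divff (lt0r_neq0 lnd0)) -mulrBl ler_pM2r ?invr_gt0 //.
  lra.
have hceil : Num.ceil (ln (1 + L') / ln (1 + d))
             <= Num.ceil (ln (1 + L) / ln (1 + d)) - 1.
  rewrite ceil_le_int intrD; apply: (le_trans hdiv); rewrite lerD2r.
  by have /andP[_ ->] := ceil_itv (ln (1 + L) / ln (1 + d)).
by apply: (le_lt_trans hceil); rewrite ltrBlDr ltrDl ltr01.
Qed.

Lemma exists_le0_of_forall_le_eps (R : realFieldType) (T : finType)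
    (P : pred T) (f : T -> R) :
  (forall eps, 0 < eps -> exists2 v, P v & f v <= eps) ->
  exists2 v, P v & f v <= 0.
Proof.
move=> approx; apply: contrapT => /forall2NP no_v.
have f_gt0 v : P v -> 0 < f v.
  by move=> Pv; rewrite ltNge; case: (no_v v) => // /negP.
pose m := \big[Order.min/1]_(v | P v) f v.
have m_gt0 : 0 < m by apply: lt_bigmin => //; exact: ltr01.
have [v Pv fv] := approx (m / 2) (divr_gt0 m_gt0 (ltr0Sn _ 1)).
have : m <= f v by exact: bigmin_le_cond.
lra.
Qed.

Lemma delta_gt0 (R : realType) (n : nat) : (0 < n)%N -> 0 < delta R n.
Proof. by move=> n0; rewrite /delta invr_gt0 ltr0n muln_gt0. Qed.

Lemma delta_mul (R : realType) (n : nat) (a : R) :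
  (0 < n)%N -> delta R n * (2 * n%:R * a) = a.
Proof.
move=> n0; rewrite /delta natrM mulrA mulVf ?mul1r //.
by rewrite mulf_neq0 // pnatr_eq0 -lt0n.
Qed.

Section LinearRelaxation.
Variables (R : realType) (n : nat) (e : rel 'I_n) (w : 'I_n -> nat).
Implicit Types (x : {ffun 'I_n -> bool}) (y : 'I_n -> R).

Lemma LP_obj_ge0 x y : LP_feasible e x y -> 0 <= LP_obj w x y.
Proof.
move=> [_ y01]; apply: sumr_ge0 => i xi.
by apply: mulr_ge0; [exact: ler0n | case/andP: (y01 i xi)].
Qed.

Lemma LP_feasible1 x : LP_feasible e x (fun=> 1 : R).
Proof. by split=> [i j _ _ _|i _]; rewrite ?ler01 ?lexx //; lra. Qed.

Lemma has_inf_LP x :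
  has_inf [set v : R | exists y, LP_feasible e x y /\ v = LP_obj w x y].
Proof.
split; last by exists 0 => _ [y [y_feas ->]]; exact: LP_obj_ge0.
by exists (LP_obj w x (fun=> 1 : R)), (fun=> 1 : R); split=> //; exact: LP_feasible1.
Qed.

Lemma LP_le_obj x y : LP_feasible e x y -> LP R e w x <= LP_obj w x y.
Proof. by move=> y_feas; apply: inf_lbound; [exact: (has_inf_LP x).2 | exists y]. Qed.

Lemma LP_ge0 x : 0 <= LP R e w x.
Proof.
apply: lb_le_inf; first exact: (has_inf_LP x).1.
by move=> _ [y [y_feas ->]]; exact: LP_obj_ge0.
Qed.

Lemma LP_approx x (eps : R) : 0 < eps ->
  exists2 y, LP_feasible e x y & LP_obj w x y < LP R e w x + eps.
Proof.
by move=> eps0; have [_ [y [y_feas ->]] lt] := inf_adherent eps0 (has_inf_LP x); exists y.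
Qed.

Lemma LP_eq0 x : (forall i j, e i j -> ~~ x i -> ~~ x j -> False) ->
  LP R e w x = 0.
Proof.
move=> no_edge; apply/eqP; rewrite eq_le LP_ge0 andbT.
have feas0 : LP_feasible e x (fun=> 0 : R).
  by split=> [i j eij xi xj | i _]; [case: (no_edge i j) | rewrite lexx ler01].
apply: (le_trans (LP_le_obj feas0)).
by rewrite /LP_obj big1 // => i _; rewrite mulr0.
Qed.

Lemma uncovered_edge x : (0 < b2 R e w x)%R ->
  exists i j, [/\ e i j, ~~ x i & ~~ x j].
Proof.
move=> b0; apply: contrapT => no_edge.
suff L0 : LP R e w x = 0 by move: b0; rewrite /b2 L0 addr0 ln1 mul0r ceil0 ltxx.
by apply: LP_eq0 => i j eij xi xj; apply: no_edge; exists i, j.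
Qed.

Lemma LP_feasible_round x y : LP_feasible e x y ->
  LP_feasible e x (fun i => if 1/2 <= y i then 1 else 0 : R).
Proof.
move=> [cover _]; split=> [i j eij xi xj | i _] /=.
  by have := cover i j eij xi xj; case: ifP => hi; case: ifP => hj; lra.
by case: ifP; rewrite ?lexx ?ler01.
Qed.

Section Flip.
Variables (x : {ffun 'I_n -> bool}) (v : 'I_n).
Hypothesis xv : ~~ x v.

Lemma flip_uncovered i : ~~ flip x v i = ~~ x i && (i != v).
Proof. by rewrite ffunE; case: eqP => [->|_]; rewrite ?xv ?andbT. Qed.

Lemma Cost_flip : Cost w (flip x v) = (Cost w x + w v)%N.
Proof.
rewrite /Cost (bigD1 v) /= ?ffunE ?eqxx // addnC; congr (_ + _)%N.
by apply: eq_bigl => i; rewrite ffunE; case: eqP => [->|_]; rewrite ?(negbTE xv) ?andbT.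
Qed.

Lemma LP_obj_flip y : LP_obj w (flip x v) y = LP_obj w x y - (w v)%:R * y v.
Proof.
rewrite /LP_obj [in RHS](bigD1 v) //= addrC addrK.
by apply: eq_bigl => i; rewrite flip_uncovered.
Qed.

Lemma LP_feasible_flip y : LP_feasible e x y -> LP_feasible e (flip x v) y.
Proof.
move=> [cover y01]; split=> [i j eij | i].
  by rewrite !flip_uncovered => /andP[xi _] /andP[xj _]; apply: cover.
by rewrite flip_uncovered => /andP[xi _]; apply: y01.
Qed.

Lemma LP_flip_le y : LP_feasible e x y ->
  LP R e w (flip x v) <= LP_obj w x y - (w v)%:R * y v.
Proof. by move=> y_feas; rewrite -LP_obj_flip; apply/LP_le_obj/LP_feasible_flip. Qed.

End Flip.

(* If some uncovered vertex has y < 1/2, rounding y at 1/2 is feasible and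
   saves that vertex; otherwise y itself is at most n times the heaviest mass. *)
Lemma LP_add1_le_heaviest x y v : (1 < n)%N -> (0 < w v)%N ->
  LP_feasible e x y -> ~~ x v -> 1/2 <= y v ->
  (forall i, ~~ x i -> 1/2 <= y i -> (w i)%:R * y i <= (w v)%:R * y v) ->
  1 + LP R e w x <= 2 * n%:R * ((w v)%:R * y v).
Proof.
move=> n2 wv0 y_feas xv yv heaviest; set a := (w v)%:R * y v in heaviest *.
have a_half : 1/2 <= a.
  have : 1 <= (w v)%:R :> R by rewrite ler1n.
  by have := ler_wpM2l (ler0n R (w v)) yv; rewrite /a; lra.
have N2 : 2 <= n%:R :> R by rewrite (ler_nat R 2 n).
case: (pselect (exists2 u, ~~ x u & y u < 1/2)) => [[u xu yu] | all_half].
  have LP_le : LP R e w x <= 2 * (n.-1)%:R * a.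
    apply: (le_trans (LP_le_obj (LP_feasible_round y_feas))).
    rewrite /LP_obj big_mkcond (bigD1 u) //= xu ifF; last by apply/negbTE; rewrite -ltNge.
    rewrite mulr0 add0r.
    apply: (@le_trans _ _ (\sum_(i | i != u) (2 * a))).
      apply: ler_sum => i _; case: ifP => xi; last lra.
      case: ifP => yi; last by rewrite mulr0; lra.
      by have := heaviest i xi yi; have := ler_wpM2l (ler0n R (w i)) yi; lra.
    by rewrite sumr_const cardC1 card_ord -[_ *+ n.-1]mulr_natr mulrAC.
  have m_eq : (n.-1)%:R = n%:R - 1 :> R.
    by rewrite -[in n%:R](prednK (ltnW n2)) -addn1 natrD addrK.
  rewrite m_eq in LP_le; nra.
have LP_le : LP R e w x <= n%:R * a.
  apply: (le_trans (LP_le_obj y_feas)); rewrite /LP_obj big_mkcond.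
  apply: (@le_trans _ _ (\sum_(i < n) a)).
    apply: ler_sum => i _; case: ifP => xi; last lra.
    apply: heaviest => //; rewrite leNgt; apply/negP => yi.
    by apply: all_half; exists i.
  by rewrite sumr_const card_ord -[_ *+ n]mulr_natr mulrC.
nra.
Qed.

Lemma exists_flip_approx x eps : (1 < n)%N -> (forall i, (0 < w i)%N) ->
  (exists i j, [/\ e i j, ~~ x i & ~~ x j]) -> 0 < eps ->
  exists2 v,
    ~~ x v && ((1 + delta R n) * (1 + LP R e w (flip x v)) <= 1 + LP R e w x)
    & LP R e w (flip x v) + (w v)%:R / 2 - LP R e w x <= eps.
Proof.
move=> n2 w_pos [i [j [eij xi xj]]] eps0.
set d := delta R n; have d0 : 0 < d by apply: delta_gt0; lia.
set eps' := Num.min eps (d / (2 * (1 + d))).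
have eps'0 : 0 < eps' by rewrite lt_min eps0 divr_gt0 //; lra.
have eps'_le : eps' <= eps by rewrite ge_min lexx.
have eps'_d : eps' * (1 + d) <= d / 2.
  have eps'_le_d : eps' <= d / (2 * (1 + d)) by rewrite ge_min lexx orbT.
  have -> : d / 2 = d / (2 * (1 + d)) * (1 + d) by field; rewrite lt0r_neq0 //; lra.
  by rewrite ler_wpM2r //; lra.
have [y y_feas y_obj] := LP_approx x eps'0.
have [u xu yu] : exists2 u, ~~ x u & 1/2 <= y u.
  have := y_feas.1 i j eij xi xj.
  by case: (lerP (1/2) (y i)) => yi; [exists i | exists j]; rewrite // ?xj; lra.
have [v /andP[xv yv] heaviest] := @arg_maxP _ _ _ u
  (fun i => ~~ x i && (1/2 <= y i)) (fun i => (w i)%:R * y i) (introT andP (conj xu yu)).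
set a := (w v)%:R * y v.
have a_ge : (w v)%:R / 2 <= a.
  by have := ler_wpM2l (ler0n R (w v)) yv; rewrite /a; lra.
have a_half : 1/2 <= a.
  have : 1 <= (w v)%:R :> R by rewrite ler1n w_pos.
  lra.
have L'_le : LP R e w (flip x v) <= LP R e w x + eps' - a.
  by have := LP_flip_le xv y_feas; rewrite -/a; lra.
have L_le : d * (1 + LP R e w x) <= a.
  rewrite -[a](delta_mul a (ltnW n2)) ler_pM2l //.
  by apply: LP_add1_le_heaviest => // k xk yk; apply: heaviest; rewrite xk.
exists v; last by lra.
rewrite xv /=.
have da : d / 2 <= d * a by rewrite ler_pM2l //; lra.
apply: (@le_trans _ _ ((1 + d) * (1 + LP R e w x + eps' - a))).
  by rewrite ler_pM2l; lra.
lra.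
Qed.

Lemma exists_flip x : (1 < n)%N -> (forall i, (0 < w i)%N) ->
  (exists i j, [/\ e i j, ~~ x i & ~~ x j]) ->
  exists2 v,
    ~~ x v && ((1 + delta R n) * (1 + LP R e w (flip x v)) <= 1 + LP R e w x)
    & LP R e w (flip x v) + (w v)%:R / 2 <= LP R e w x.
Proof.
move=> n2 w_pos edge.
have [v Pv gain] := exists_le0_of_forall_le_eps
  (fun eps => @exists_flip_approx x eps n2 w_pos edge).
by exists v => //; lra.
Qed.

End LinearRelaxation.

Theorem lemma8 (R : realType) (n : nat) (e : rel 'I_n) (w : 'I_n -> nat)
  (e_sym : symmetric e) (e_irr : irreflexive e)
  (w_pos : forall i, (0 < w i)%N)
  (x : {ffun 'I_n -> bool})
  (hx : (Cost w x)%:R + 2 * LP R e w x <= 2 * (OPT e w)%:R)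
  (hb : (0 < b2 R e w x)%R) :
  exists i : 'I_n,
    (Cost w (flip x i))%:R + 2 * LP R e w (flip x i) <= 2 * (OPT e w)%:R
    /\ (b2 R e w (flip x i) < b2 R e w x)%R.
Proof.
have edge := uncovered_edge hb.
have n2 : (1 < n)%N.
  have [i [j [eij _ _]]] := edge.
  have : i != j by apply: contraTneq eij => ->; rewrite e_irr.
  by rewrite -val_eqE /=; have := ltn_ord i; have := ltn_ord j; lia.
have [v /andP[xv b2_le] gain] := exists_flip R n2 w_pos edge.
exists v; split.
  by rewrite Cost_flip // natrD; lra.
by apply: ceil_div_ln_lt => //; [apply: delta_gt0; lia | exact: LP_ge0].
Qed.
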